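(* Let $L$ be a finite-dimensional Lie algebra over any field $F$ which has the one-and-a-half generation property. Then every proper non-zero semi-modular subalgebra of $L$ is a modular maximal subalgebra of $L$.
   Context: $L$ has the one-and-a-half generation property if for every $0\ne x\in L$ there is $y\in L$ with $\langle x,y\rangle=L$, where $\langle\,\cdot\,\rangle$ denotes the generated subalgebra. A subalgebra $B$ covers a subalgebra $A$ if $A$ is a maximal subalgebra of $B$. A subalgebra $U$ is modular in $L$ if $\langle U,B\rangle\cap C=\langle B,U\cap C\rangle$ for all subalgebras $B\subseteq C$ of $L$, and $\langle U,B\rangle\cap C=\langle B\cap C,U\rangle$ for all subalgebras $B,C$ of $L$ with $U\subseteq C$. $U$ is upper modular (um) in $L$ if whenever $B$ is a subalgebra of $L$ which covers $U\cap B$, then $\langle U,B\rangle$ covers $U$; $U$ is lower modular (lm) in $L$ if whenever $B$ is a subalgebra of $L$ such that $\langle U,B\rangle$ covers $U$, then $B$ covers $U\cap B$; $U$ is semi-modular (sm) in $L$ if it is both um and lm. *)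

(* finite-dimensional Lie algebras over a field F are modelled
   as a finite-dimensional F-vector space L : vectType F together with a
   bracket br : L -> L -> L satisfying the Lie algebra axioms. *)
From HB Require Import structures.
From mathcomp Require Import all_boot all_order all_algebra.
Set Implicit Arguments. Unset Strict Implicit. Unset Printing Implicit Defensive.
Import GRing.Theory.
Local Open Scope ring_scope.

Section Lie.
Variables (F : fieldType) (L : vectType F) (br : L -> L -> L).

Definition lie_bracket : Prop :=
  [/\ forall (a : F) (x y z : L), br (a *: x + y) z = a *: br x z + br y z,
      forall (a : F) (x y z : L), br x (a *: y + z) = a *: br x y + br x z,
      forall x : L, br x x = 0 &
      forall x y z : L, br x (br y z) + br y (br z x) + br z (br x y) = 0].

Definition subalg (U : {vspace L}) : Prop :=
  forall x y, x \in U -> y \in U -> br x y \in U.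

Definition brsp (U V : {vspace L}) : {vspace L} :=
  <<[seq br u v | u <- vbasis U, v <- vbasis V]>>%VS.

(* the subalgebra generated by a subspace U: iterate V |-> V + [V,V];
   this stabilises after at most \dim L steps *)
Definition gen (U : {vspace L}) : {vspace L} :=
  iter (\dim (fullv : {vspace L})) (fun V => (V + brsp V V)%VS) U.

Definition gen2 (x y : L) : {vspace L} := gen (<[x]> + <[y]>)%VS.

Definition one_and_half_gen : Prop :=
  forall x : L, x != 0 -> exists y : L, gen2 x y = fullv.

Definition covers (B A : {vspace L}) : Prop :=
  [/\ subalg B, subalg A, (A <= B)%VS, A != B &
      forall C : {vspace L}, subalg C -> (A <= C)%VS -> (C <= B)%VS ->
        C = A \/ C = B].

Definition maximal_subalg (U : {vspace L}) : Prop := covers fullv U.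

Definition modular (U : {vspace L}) : Prop :=
  (forall B C : {vspace L}, subalg B -> subalg C -> (B <= C)%VS ->
     (gen (U + B) :&: C)%VS = gen (B + (U :&: C))%VS) /\
  (forall B C : {vspace L}, subalg B -> subalg C -> (U <= C)%VS ->
     (gen (U + B) :&: C)%VS = gen ((B :&: C) + U)%VS).

Definition upper_modular (U : {vspace L}) : Prop :=
  forall B : {vspace L}, subalg B -> covers B (U :&: B)%VS ->
    covers (gen (U + B)%VS) U.

Definition lower_modular (U : {vspace L}) : Prop :=
  forall B : {vspace L}, subalg B -> covers (gen (U + B)%VS) U ->
    covers B (U :&: B)%VS.

Definition semi_modular (U : {vspace L}) : Prop :=
  upper_modular U /\ lower_modular U.

End Lie.

(* A nonzero x in U has a partner y with <x, y> = L. Then y is not in U, so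
   the line <y> covers U :&: <y> = 0, and upper modularity makes <U, y> = L
   cover U: U is maximal. For a maximal subalgebra U, every subalgebra B not
   contained in U generates L together with U, so both modular laws reduce to
   a case split on B <= U; in the first law the remaining case needs that
   U :&: C is maximal in C, which is exactly what lower modularity gives. *)
From HB Require Import structures.
From mathcomp Require Import all_boot all_order all_algebra.
Set Implicit Arguments. Unset Strict Implicit. Unset Printing Implicit Defensive.
Import GRing.Theory.
Local Open Scope ring_scope.

Section LieSubalgebras.
Variables (F : fieldType) (L : vectType F) (br : L -> L -> L).
Hypothesis hL : lie_bracket br.

Lemma br_addl x y z : br (x + y) z = br x z + br y z.
Proof. by case: hL => linl _ _ _; have := linl 1 x y z; rewrite !scale1r. Qed.

Lemma br_addr x y z : br z (x + y) = br z x + br z y.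
Proof. by case: hL => _ linr _ _; have := linr 1 z x y; rewrite !scale1r. Qed.

Lemma br0l z : br 0 z = 0.
Proof. by apply: (addrI (br 0 z)); rewrite -br_addl !addr0. Qed.

Lemma br0r z : br z 0 = 0.
Proof. by apply: (addrI (br z 0)); rewrite -br_addr !addr0. Qed.

Lemma br_scalel a x z : br (a *: x) z = a *: br x z.
Proof. by case: hL => linl _ _ _; have := linl a x 0 z; rewrite !addr0 br0l addr0. Qed.

Lemma br_scaler a x z : br z (a *: x) = a *: br z x.
Proof. by case: hL => _ linr _ _; have := linr a z x 0; rewrite !addr0 br0r addr0. Qed.

Lemma br_suml n (c : 'I_n -> F) (v : 'I_n -> L) z :
  br (\sum_i c i *: v i) z = \sum_i c i *: br (v i) z.
Proof.
apply: (big_rec2 (fun a b => br a z = b)); first exact: br0l.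
by move=> i a b _ <-; rewrite br_addl br_scalel.
Qed.

Lemma br_sumr n (c : 'I_n -> F) (v : 'I_n -> L) z :
  br z (\sum_i c i *: v i) = \sum_i c i *: br z (v i).
Proof.
apply: (big_rec2 (fun a b => br z a = b)); first exact: br0r.
by move=> i a b _ <-; rewrite br_addr br_scaler.
Qed.

Lemma memv_brsp (V W : {vspace L}) x y :
  x \in V -> y \in W -> br x y \in brsp br V W.
Proof.
move=> /coord_vbasis -> /coord_vbasis ->.
rewrite br_suml; apply: rpred_sum => i _; apply: rpredZ.
rewrite br_sumr; apply: rpred_sum => j _; apply: rpredZ.
by apply/memv_span/allpairs_f; apply: mem_nth; rewrite size_tuple.
Qed.

Lemma brsp_sub (V W : {vspace L}) :
  subalg br W -> (V <= W)%VS -> (brsp br V V <= W)%VS.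
Proof.
move=> sW /subvP sVW; apply/span_subvP => _ /allpairsP[[u v] [/= hu hv ->]].
by apply: sW; apply: sVW; apply: vbasis_mem.
Qed.

Definition gen_step (V : {vspace L}) := (V + brsp br V V)%VS.

Lemma gen_min (A W : {vspace L}) :
  subalg br W -> (A <= W)%VS -> (gen br A <= W)%VS.
Proof.
move=> sW sAW; rewrite /gen; elim: (\dim _) => [|k IH] //=.
by rewrite subv_add IH brsp_sub.
Qed.

Lemma gen_sub (A : {vspace L}) : (A <= gen br A)%VS.
Proof.
rewrite /gen; elim: (\dim _) => [|k IH] //=.
exact: subv_trans IH (addvSl _ _).
Qed.

Lemma dim_gen_step_gt (V : {vspace L}) :
  gen_step V != V -> (\dim V < \dim (gen_step V))%N.
Proof.
move=> ne; have := dimv_leqif_eq (addvSl V (brsp br V V)).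
by rewrite /gen_step => /ltn_leqif ->; rewrite eq_sym.
Qed.

Lemma iter_gen_step_fixed_or_dim_gt (A : {vspace L}) k :
  gen_step (iter k gen_step A) = iter k gen_step A \/
  (k < \dim (iter k.+1 gen_step A))%N.
Proof.
elim: k => [|k [IH|IH]].
- case: (eqVneq (gen_step A) A); first by left.
  by move=> /dim_gen_step_gt/(leq_ltn_trans (leq0n _)); right.
- by left; rewrite iterS IH.
- case: (eqVneq (gen_step (iter k.+1 gen_step A)) (iter k.+1 gen_step A)).
    by left.
  by move=> /dim_gen_step_gt/(leq_ltn_trans IH); right.
Qed.

Lemma gen_subalg (A : {vspace L}) : subalg br (gen br A).
Proof.
have fixed : gen_step (gen br A) = gen br A.
  have [//|] := iter_gen_step_fixed_or_dim_gt A (\dim (fullv : {vspace L})).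
  by move=> /leq_trans/(_ (dimvS (subvf _))); rewrite ltnn.
move=> x y xA yA; rewrite -fixed; apply: subvP (addvSr _ _) _ _.
exact: memv_brsp.
Qed.
Arguments gen_subalg A : clear implicits.

Lemma gen_id (A : {vspace L}) : subalg br A -> gen br A = A.
Proof. by move=> sA; apply: subv_anti; rewrite gen_min // gen_sub. Qed.

Lemma gen_mono (A B : {vspace L}) : (A <= B)%VS -> (gen br A <= gen br B)%VS.
Proof. by move=> sAB; apply: gen_min (gen_subalg B) (subv_trans sAB (gen_sub B)). Qed.

Lemma subalg_cap (A B : {vspace L}) :
  subalg br A -> subalg br B -> subalg br (A :&: B)%VS.
Proof. by move=> sA sB x y; rewrite !memv_cap => /andP[? ?] /andP[? ?]; rewrite sA ?sB. Qed.

Lemma subalg0 : subalg br 0%VS.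
Proof. by move=> a b; rewrite !memv0 => /eqP-> _; rewrite br0l. Qed.

Lemma subalg_line y : subalg br <[y]>%VS.
Proof.
move=> _ _ /vlineP[c ->] /vlineP[d ->].
by case: hL => _ _ brxx _; rewrite br_scalel br_scaler brxx !scaler0 mem0v.
Qed.
Arguments subalg_line y : clear implicits.

Lemma covers_line y : y != 0 -> covers br <[y]>%VS 0%VS.
Proof.
move=> y0; split; [exact: subalg_line|exact: subalg0|exact: sub0v| |].
  by rewrite eq_sym -dimv_eq0 dim_vline y0.
move=> C _ _ sCy; have := dimvS sCy; rewrite dim_vline y0.
case: (eqVneq (\dim C) 0%N) => [C0|C0] _; [left | right].
  by apply/eqP; rewrite -dimv_eq0 C0.
by apply/eqP; rewrite eqEdim sCy dim_vline y0 lt0n.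
Qed.

Lemma capv_line_eq0 (U : {vspace L}) y : y \notin U -> (U :&: <[y]>)%VS = 0%VS.
Proof.
move=> yU; apply/eqP; rewrite -subv0; apply/subvP => z /memv_capP[zU /vlineP[c zE]].
move: zU; rewrite zE memv0 scaler_eq0; case: (eqVneq c 0) => //= c0 cyU.
by case/negP: yU; rewrite -[y](scalerK c0) rpredZ.
Qed.

Lemma covers_between (A B C : {vspace L}) : covers br B A ->
  subalg br C -> (A <= C)%VS -> (C <= B)%VS -> C = A \/ C = B.
Proof. by move=> [_ _ _ _]; apply. Qed.

Lemma upper_modular_maximal U :
  one_and_half_gen br -> subalg br U -> U != 0%VS -> U != fullv ->
  upper_modular br U -> maximal_subalg br U.
Proof.
move=> gen15 sU U0 Uf umU.
have [y genxy] : exists y, gen2 br (vpick U) y = fullv.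
  by apply: gen15; rewrite vpick0.
have xU := memv_pick U.
have yU : y \notin U.
  apply: contra Uf => yU; rewrite eqEsubv subvf -genxy /gen2.
  by rewrite gen_min // subv_add -!memvE xU.
have y0 : y != 0 by apply: contraNneq yU => ->; exact: mem0v.
have := umU _ (subalg_line y); rewrite capv_line_eq0 // => /(_ (covers_line y0)).
suff -> : gen br (U + <[y]>)%VS = fullv by [].
apply/eqP; rewrite eqEsubv subvf -genxy gen_mono //.
by apply: addvS; rewrite // -memvE.
Qed.

Section Maximal.
Variable U : {vspace L}.
Hypothesis maxU : maximal_subalg br U.

Lemma maximal_gen_addv B :
  subalg br B -> ~~ (B <= U)%VS -> gen br (U + B)%VS = fullv.
Proof.
move=> sB BU; have [genU|//] := covers_between maxU (gen_subalg (U + B)%VS)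
  (subv_trans (addvSl U B) (gen_sub _)) (subvf _).
by move: BU; rewrite -genU (subv_trans (addvSr U B) (gen_sub _)).
Qed.

Lemma maximal_modular_sup B C : subalg br B -> subalg br C -> (U <= C)%VS ->
  (gen br (U + B) :&: C)%VS = gen br ((B :&: C) + U)%VS.
Proof.
have sU : subalg br U by case: maxU.
move=> sB sC UC; have [BU|BU] := boolP (B <= U)%VS.
  rewrite (addv_idPl BU) (gen_id sU) (capv_idPl UC).
  by rewrite (addv_idPr (subv_trans (capvSl B C) BU)) gen_id.
rewrite maximal_gen_addv // capfv.
have [->|->] := covers_between maxU sC UC (subvf C).
  by rewrite (addv_idPr (capvSr _ _)) gen_id.
by rewrite capvf addvC maximal_gen_addv.
Qed.

Lemma maximal_lower_modular_sub B C : lower_modular br U ->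
  subalg br B -> subalg br C -> (B <= C)%VS ->
  (gen br (U + B) :&: C)%VS = gen br (B + (U :&: C))%VS.
Proof.
have sU : subalg br U by case: maxU.
move=> lmU sB sC BC; have [BU|BU] := boolP (B <= U)%VS.
  rewrite (addv_idPl BU) (gen_id sU).
  have BUC : (B <= U :&: C)%VS by rewrite subv_cap BU BC.
  by rewrite (addv_idPr BUC) gen_id //; apply: subalg_cap.
rewrite maximal_gen_addv // capfv.
have CU : ~~ (C <= U)%VS by apply: contra BU; apply: subv_trans BC.
have coverC : covers br C (U :&: C)%VS.
  by apply: (lmU C sC); rewrite maximal_gen_addv.
have genC : (gen br (B + U :&: C) <= C)%VS.
  by rewrite gen_min // subv_add BC capvSr.
have [genUC|//] := covers_between coverC (gen_subalg _)
  (subv_trans (addvSr B _) (gen_sub _)) genC.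
case/negP: BU; apply: subv_trans (capvSl U C).
by rewrite -genUC (subv_trans (addvSl _ _) (gen_sub _)).
Qed.

End Maximal.

End LieSubalgebras.

Theorem theorem2p8 (F : fieldType) (L : vectType F) (br : L -> L -> L) :
  lie_bracket br -> one_and_half_gen br ->
  forall U : {vspace L},
    subalg br U -> U != 0%VS -> U != fullv -> semi_modular br U ->
    modular br U /\ maximal_subalg br U.
Proof.
move=> hL gen15 U sU U0 Uf [umU lmU].
have maxU := upper_modular_maximal hL gen15 sU U0 Uf umU.
split=> //; split=> B C sB sC.
- exact: maximal_lower_modular_sub.
- exact: maximal_modular_sup.
Qed.
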